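(* Let $\mu$ be the Cauchy distribution $d\mu(x)=\frac1\pi\frac{dx}{1+x^2}$ and $t>0$. For each $u\in\mathbb R$, $v_{t}(u)$ is the unique positive number $v$ satisfying \[u^2=\frac1v(1+v)(t-v-v^2).\] Consequently $u$ and $\frac{dv_t}{du}(u)$ have opposite sign; in particular $v_t$ is unimodal with peak at $0$, and $v_t(0)=\frac{-1+\sqrt{1+4t}}{2}$.
   Context: $v_t(u)=\inf\{v>0:\int\frac{d\mu(x)}{(u-x)^2+v^2}\le\frac1t\}$ for $u\in\mathbb R$. *)

From HB Require Import structures.
From mathcomp Require Import all_boot all_order all_algebra.
From mathcomp Require Import all_classical all_reals all_analysis.
Set Implicit Arguments. Unset Strict Implicit. Unset Printing Implicit Defensive.
Import Order.TTheory GRing.Theory Num.Theory.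
Local Open Scope classical_set_scope.
Local Open Scope ring_scope.

Definition cauchy_density (R : realType) (x : R) : R := (pi * (1 + x ^+ 2))^-1.

Definition cauchy_G (R : realType) (u v : R) : \bar R :=
  (\int[@lebesgue_measure R]_(x in setT)
     ((cauchy_density x / ((u - x) ^+ 2 + v ^+ 2))%:E))%E.

Definition v_t (R : realType) (t u : R) : R :=
  inf [set v : R | 0 < v /\ (cauchy_G u v <= (t^-1)%:E)%E].

From mathcomp Require Import all_boot all_order all_algebra.
From mathcomp Require Import all_classical all_reals all_analysis.
From mathcomp Require Import measurable_realfun ring lra.
Set Implicit Arguments. Unset Strict Implicit. Unset Printing Implicit Defensive.
Import Order.TTheory GRing.Theory Num.Theory.
Import numFieldNormedType.Exports.
Local Open Scope classical_set_scope.
Local Open Scope ring_scope.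

(* By partial fractions and the improper fundamental theorem of calculus on
   both half-lines, G(u, v) = (1 + v) / (v (u^2 + (1 + v)^2)).  Hence
   G(u, v) <= 1/t iff [usq_of_v v] <= u^2, where
   [usq_of_v v] = (1 + v)(t - v - v^2) / v is strictly decreasing on ]0, +oo[
   and reaches u^2 by the intermediate value theorem: v_t(u) is its unique
   positive solution.  The chord identity
   [usq_of_v a - usq_of_v b = (b - a) (t / (a b) + 2 + a + b)], whose second
   factor exceeds 1, turns this into
   v_t(x) - v_t(u) = (u^2 - x^2) / (t / (v_t(u) v_t(x)) + 2 + v_t(u) + v_t(x)),
   which yields continuity, the derivative -2u / (t / v_t(u)^2 + 2 + 2 v_t(u))
   and the monotonicity on each side of 0. *)

Section improper_integral.
Context {R : realType}.
Local Notation mu := (@lebesgue_measure R).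

Lemma derivable1_continuous (f : R -> R) (x : R) :
  derivable f x 1 -> {for x, continuous f}.
Proof. by move=> /derivable1_diffP/differentiable_continuous. Qed.

Lemma cvgy_invr : (x : R)^-1 @[x --> +oo] --> 0.
Proof.
rewrite (@gtr0_cvgV0 _ _ _ _ id); first exact: cvg_id.
by apply: filterS (nbhs_pinfty_gt (num_real 0)).
Qed.

Lemma cvgy_comp_invr (g : R -> R) :
  {for (0 : R), continuous g} -> g (x : R)^-1 @[x --> +oo] --> g 0.
Proof. exact: cvg_comp _ _ cvgy_invr. Qed.

Lemma is_derive_FTC2y (f F : R -> R) (a l : R) :
  (forall x, 0 <= f x) -> continuous f ->
  (forall x : R, is_derive x 1 F (f x)) -> F x @[x --> +oo] --> l ->
  (\int[mu]_(x in `[a, +oo[) (f x)%:E = (l - F a)%:E)%E.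
Proof.
move=> f_ge0 cf dF Fl; rewrite EFinB.
apply: ge0_continuous_FTC2y => //.
- exact: continuous_subspaceT.
- by apply/cvg_at_right_filter/derivable1_continuous; case: (dF a).
- by move=> x _; rewrite derive1E derive_val.
Qed.

Lemma ge0_continuous_integral_setT (f : R -> R) :
  (forall x, 0 <= f x) -> continuous f ->
  (\int[mu]_(x in setT) (f x)%:E = \int[mu]_(x in `[0%R, +oo[) (f x)%:E
     + \int[mu]_(x in `[0%R, +oo[) (f (- x))%:E)%E.
Proof.
move=> f_ge0 cf.
have mf := continuous_measurable_fun cf.
have -> : [set: R] = `]-oo, 0[ `|` `[0, +oo[.
  by rewrite -itv_bndbnd_setU //= set_itvNyy.
rewrite ge0_integral_setU //=; last 3 first.
- by apply/measurable_EFinP; exact: measurable_funS mf.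
- by move=> x _; rewrite lee_fin.
- apply/disj_setPS => x [] /=; rewrite !in_itv /= andbT => x_lt0 x_ge0.
  by move: (lt_le_trans x_lt0 x_ge0); rewrite ltxx.
rewrite addeC integral_itv_bndo_bndc; last first.
  by apply/measurable_EFinP; exact: measurable_funS mf.
rewrite -[in `]-oo, 0]]oppr0 ge0_integration_by_substitutionNy //.
exact: continuous_subspaceT.
Qed.

End improper_integral.

Section cauchy_G_closed_form.
Context {R : realType}.
Local Notation mu := (@lebesgue_measure R).

Let pi_neq0 : pi != 0 :> R := lt0r_neq0 (pi_gt0 R).

Definition cauchy_G_integrand (u v x : R) : R :=
  cauchy_density x / ((u - x) ^+ 2 + v ^+ 2).

Lemma cauchy_G_integrand_ge0 u v x : 0 <= cauchy_G_integrand u v x.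
Proof.
rewrite /cauchy_G_integrand /cauchy_density.
by rewrite divr_ge0 ?invr_ge0 ?(mulr_ge0 (pi_ge0 R)) ?addr_ge0 ?sqr_ge0.
Qed.

Lemma cauchy_G_integrandN u v x :
  cauchy_G_integrand u v (- x) = cauchy_G_integrand (- u) v x.
Proof. by rewrite /cauchy_G_integrand /cauchy_density sqrrN -opprD sqrrN opprK. Qed.

Lemma continuous_cauchy_G_integrand u v : 0 < v -> continuous (cauchy_G_integrand u v).
Proof.
move=> v_gt0 x; apply: derivable1_continuous.
have P0 : pi * (1 + x ^+ 2) != 0.
  by rewrite mulf_neq0 // gt_eqF // ltr_pwDl // sqr_ge0.
have Q0 : (u - x) ^+ 2 + v ^+ 2 != 0.
  by rewrite gt_eqF // ltr_wpDl ?sqr_ge0 // exprn_gt0.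
have dP := @is_deriveV R (fun y => pi * (1 + y ^+ 2)) x _ 1 P0.
have dQ := @is_deriveV R (fun y => (u - y) ^+ 2 + v ^+ 2) x _ 1 Q0.
by rewrite /cauchy_G_integrand /cauchy_density; apply: ex_derive.
Qed.

Lemma is_derive1_ln_comp (g : R -> R) (x dg : R) : 0 < g x ->
  is_derive x 1 g dg -> is_derive x 1 (fun y => ln (g y)) ((g x)^-1 * dg).
Proof. by move=> gx_gt0 dgx; exact: is_derive1_comp (is_derive1_ln gx_gt0) dgx. Qed.

Lemma is_derive1_atan_comp (g : R -> R) (x dg : R) :
  is_derive x 1 g dg -> is_derive x 1 (fun y => atan (g y)) ((1 + g x ^+ 2)^-1 * dg).
Proof. by move=> dgx; exact: is_derive1_comp (is_derive1_atan (g x)) dgx. Qed.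

Lemma cvgy_atan_affine (a b : R) : 0 < b -> atan ((x - a) / b) @[x --> +oo] --> pi / 2.
Proof.
move=> b_gt0; apply: (cvg_comp (fun x => (x - a) / b) (@atan R) _ (@cvgy_atan R)).
apply/cvgryPge => A.
near=> x; rewrite ler_pdivlMr // lerBrDr.
by near: x; apply: nbhs_pinfty_ge; rewrite num_real.
Unshelve. all: by end_near. Qed.

Lemma cvgy_ln_ratio (a b : R) : 0 < b ->
  ln (1 + x ^+ 2) - ln ((x - a) ^+ 2 + b ^+ 2) @[x --> +oo] --> (0 : R).
Proof.
move=> b_gt0.
pose r y := (1 + y ^+ 2) / ((1 - a * y) ^+ 2 + (b * y) ^+ 2).
have r0 : r 0 = 1 by rewrite /r !mulr0 subr0 expr1n expr0n /= addr0 invr1 mulr1.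
have r_cont : {for 0, continuous r}.
  apply: derivable1_continuous.
  have Q0 : (1 - a * 0) ^+ 2 + (b * 0) ^+ 2 != 0 :> R.
    by rewrite !mulr0 subr0 expr1n expr0n /= addr0 oner_neq0.
  have dQ := @is_deriveV R (fun y => (1 - a * y) ^+ 2 + (b * y) ^+ 2) 0 _ 1 Q0.
  exact: ex_derive.
have ln_cont : {for r 0, continuous (@ln R)} by apply: continuous_ln; rewrite r0.
have := cvgy_comp_invr (continuous_comp r_cont ln_cont).
rewrite /= r0 ln1; apply: cvg_trans; apply: near_eq_cvg; near=> x.
have x_gt0 : 0 < x by near: x; apply: nbhs_pinfty_gt; rewrite num_real.
have P_gt0 : 0 < 1 + x ^+ 2 by rewrite ltr_pwDl // sqr_ge0.
have Q_gt0 : 0 < (x - a) ^+ 2 + b ^+ 2 by rewrite ltr_wpDl ?sqr_ge0 // exprn_gt0.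
rewrite /= -lnV ?posrE // -lnM ?posrE ?invr_gt0 //; congr (ln _).
by rewrite /r; field; rewrite !gt_eqF.
Unshelve. all: by end_near. Qed.

(* Partial fractions for [1 / ((1 + x^2) ((x - a)^2 + b^2))]; the common
   denominator vanishes only for [a = 0, b = 1], when the two factors coincide. *)
Definition cauchy_G_primitive (a b x : R) : R :=
  (a * (ln (1 + x ^+ 2) - ln ((x - a) ^+ 2 + b ^+ 2))
   + (a ^+ 2 + b ^+ 2 - 1) * atan x
   + (2 * a ^+ 2 - (a ^+ 2 + b ^+ 2 - 1)) / b * atan ((x - a) / b))
  / (pi * ((a ^+ 2 + b ^+ 2 - 1) ^+ 2 + 4 * a ^+ 2)).

Lemma is_derive_cauchy_G_primitive (a b x : R) :
  0 < b -> (a ^+ 2 + b ^+ 2 - 1) ^+ 2 + 4 * a ^+ 2 != 0 ->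
  is_derive x 1 (cauchy_G_primitive a b) (cauchy_G_integrand a b x).
Proof.
move=> b_gt0 K_neq0.
have P_gt0 : 0 < 1 + x ^+ 2 by rewrite ltr_pwDl // sqr_ge0.
have Q_gt0 : 0 < (x - a) ^+ 2 + b ^+ 2 by rewrite ltr_wpDl ?sqr_ge0 // exprn_gt0.
have dP := @is_derive1_ln_comp (fun y => 1 + y ^+ 2) x _ P_gt0 _.
have dQ := @is_derive1_ln_comp (fun y => (y - a) ^+ 2 + b ^+ 2) x _ Q_gt0 _.
have dA := @is_derive1_atan_comp (fun y => (y - a) / b) x _ _.
rewrite /cauchy_G_primitive /cauchy_G_integrand /cauchy_density.
apply: is_derive_eq.
(* [field] would unfold [pi]. *)
move: pi_neq0; generalize (@pi R) => p p_neq0.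
rewrite /GRing.scale /=.
by field; rewrite -[a - x]opprB sqrrN p_neq0 K_neq0 !gt_eqF.
Qed.

Lemma cvgy_cauchy_G_primitive (a b : R) : 0 < b ->
  cauchy_G_primitive a b x @[x --> +oo] -->
  ((a ^+ 2 + b ^+ 2 - 1) * (pi / 2) + (2 * a ^+ 2 - (a ^+ 2 + b ^+ 2 - 1)) / b * (pi / 2))
  / (pi * ((a ^+ 2 + b ^+ 2 - 1) ^+ 2 + 4 * a ^+ 2)).
Proof.
move=> b_gt0; rewrite -[X in X + _]add0r -(mulr0 a).
apply: cvgM; last exact: cvg_cst.
apply: cvgD; [apply: cvgD|]; apply: cvgM; try exact: cvg_cst.
- exact: cvgy_ln_ratio.
- exact: cvgy_atan.
- exact: cvgy_atan_affine.
Qed.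

Definition cauchy_G_primitive01 (x : R) : R := (x / (1 + x ^+ 2) + atan x) / (2 * pi).

Lemma is_derive_cauchy_G_primitive01 (x : R) :
  is_derive x 1 cauchy_G_primitive01 (cauchy_G_integrand 0 1 x).
Proof.
have P_neq0 : 1 + x ^+ 2 != 0 by rewrite gt_eqF // ltr_pwDl // sqr_ge0.
have dP := @is_deriveV R (fun y => 1 + y ^+ 2) x _ 1 P_neq0.
rewrite /cauchy_G_primitive01 /cauchy_G_integrand /cauchy_density.
apply: is_derive_eq.
move: pi_neq0; generalize (@pi R) => p p_neq0.
rewrite /GRing.scale /= sub0r sqrrN expr1n.
by field; rewrite addrC P_neq0 p_neq0.
Qed.

Lemma cvgy_cauchy_G_primitive01 :
  cauchy_G_primitive01 x @[x --> +oo] --> (pi / 2) / (2 * pi).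
Proof.
rewrite -[X in X / _]add0r; apply: cvgM; last exact: cvg_cst.
apply: cvgD; last exact: cvgy_atan.
pose r (y : R) := y / (y ^+ 2 + 1).
have r_cont : {for 0, continuous r}.
  apply: derivable1_continuous.
  have Q0 : (0 : R) ^+ 2 + 1 != 0 by rewrite expr0n /= add0r oner_neq0.
  have dQ := @is_deriveV R (fun y => y ^+ 2 + 1) 0 _ 1 Q0.
  exact: ex_derive.
have := cvgy_comp_invr r_cont; rewrite {2}/r mul0r.
apply: cvg_trans; apply: near_eq_cvg; near=> x.
have x_gt0 : 0 < x by near: x; apply: nbhs_pinfty_gt; rewrite num_real.
have P_gt0 : 0 < 1 + x ^+ 2 by rewrite ltr_pwDl // sqr_ge0.
by rewrite /r /=; field; rewrite !gt_eqF.
Unshelve. all: by end_near. Qed.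

Lemma cauchy_G_itv0y (u v : R) : 0 < v ->
  cauchy_G u v = (\int[mu]_(x in `[0%R, +oo[) (cauchy_G_integrand u v x)%:E
    + \int[mu]_(x in `[0%R, +oo[) (cauchy_G_integrand (- u) v x)%:E)%E.
Proof.
move=> v_gt0; rewrite /cauchy_G.
change (fun x => (cauchy_density x / ((u - x) ^+ 2 + v ^+ 2))%:E)
  with (fun x => (cauchy_G_integrand u v x)%:E).
rewrite ge0_continuous_integral_setT //.
- by under [X in (_ + X)%E]eq_integral do rewrite cauchy_G_integrandN.
- exact: cauchy_G_integrand_ge0.
- exact: continuous_cauchy_G_integrand.
Qed.

Lemma cauchy_G_closed_form (u v : R) : 0 < v ->
  cauchy_G u v = ((1 + v) / (v * (u ^+ 2 + (1 + v) ^+ 2)))%:E.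
Proof.
move=> v_gt0; rewrite cauchy_G_itv0y //.
have f_cont w : continuous (cauchy_G_integrand w v).
  exact: continuous_cauchy_G_integrand.
have FTC w := is_derive_FTC2y 0 (@cauchy_G_integrand_ge0 w v) (f_cont w).
have [K0|K_neq0] := eqVneq ((u ^+ 2 + v ^+ 2 - 1) ^+ 2 + 4 * u ^+ 2) 0.
  have u0 : u = 0.
    have := sqr_ge0 (u ^+ 2 + v ^+ 2 - 1); have := sqr_ge0 u.
    by move=> ? ?; apply/eqP; rewrite -sqrf_eq0; apply/eqP; lra.
  have v1 : v = 1.
    move/eqP: K0; rewrite u0 expr0n add0r mulr0 addr0 sqrf_eq0 subr_eq0 => /eqP.
    by nra.
  subst u v; rewrite oppr0.
  rewrite (FTC _ _ _ is_derive_cauchy_G_primitive01 cvgy_cauchy_G_primitive01).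
  rewrite -EFinD /cauchy_G_primitive01 atan0; congr (_%:E).
  move: pi_neq0; generalize (@pi R) => p p_neq0.
  by field.
have K_neq0' : ((- u) ^+ 2 + v ^+ 2 - 1) ^+ 2 + 4 * (- u) ^+ 2 != 0 by rewrite sqrrN.
rewrite (FTC _ _ _ (fun x => is_derive_cauchy_G_primitive x v_gt0 K_neq0)
  (cvgy_cauchy_G_primitive v_gt0)).
rewrite (FTC _ _ _ (fun x => is_derive_cauchy_G_primitive x v_gt0 K_neq0')
  (cvgy_cauchy_G_primitive v_gt0)).
rewrite -EFinD /cauchy_G_primitive !expr0n /= !addr0 ln1 !sub0r !sqrrN !opprK.
rewrite !mulNr atanN atan0; congr (_%:E).
have D_neq0 : u ^+ 2 + (1 + v) ^+ 2 != 0.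
  by rewrite gt_eqF // ltr_wpDl ?sqr_ge0 // exprn_gt0 // ltr_wpDl.
move: pi_neq0; generalize (@pi R) => p p_neq0.
by field; rewrite D_neq0 K_neq0 p_neq0 gt_eqF.
Qed.

End cauchy_G_closed_form.

Section v_t_characterization.
Context {R : realType}.
Variable t : R.
Hypothesis t_gt0 : 0 < t.

Definition usq_of_v (v : R) : R := v^-1 * (1 + v) * (t - v - v ^+ 2).

Definition usq_of_v_slope (a b : R) : R := t / (a * b) + 2 + a + b.

Lemma usq_of_v_slope_gt1 a b : 0 < a -> 0 < b -> 1 < usq_of_v_slope a b.
Proof.
move=> a_gt0 b_gt0; have : 0 < t / (a * b) by rewrite divr_gt0 ?mulr_gt0.
rewrite /usq_of_v_slope; lra.
Qed.

Lemma usq_of_v_slope_gt0 a b : 0 < a -> 0 < b -> 0 < usq_of_v_slope a b.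
Proof. by move=> a_gt0 b_gt0; rewrite (lt_trans ltr01) // usq_of_v_slope_gt1. Qed.

Lemma usq_of_vB a b : a != 0 -> b != 0 ->
  usq_of_v a - usq_of_v b = (b - a) * usq_of_v_slope a b.
Proof.
by move=> a_neq0 b_neq0; rewrite /usq_of_v /usq_of_v_slope; field; rewrite a_neq0 b_neq0.
Qed.

Lemma ler_usq_of_v a b : 0 < a -> 0 < b -> (usq_of_v a <= usq_of_v b) = (b <= a).
Proof.
move=> a_gt0 b_gt0; rewrite -subr_le0 usq_of_vB ?gt_eqF //.
by rewrite pmulr_lle0 ?subr_le0 // usq_of_v_slope_gt0.
Qed.

Lemma cauchy_G_le_invr u v : 0 < v ->
  (cauchy_G u v <= (t^-1)%:E)%E = (usq_of_v v <= u ^+ 2).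
Proof.
move=> v_gt0; have D_gt0 : 0 < u ^+ 2 + (1 + v) ^+ 2.
  by rewrite ltr_wpDl ?sqr_ge0 // exprn_gt0 // ltr_wpDl.
rewrite cauchy_G_closed_form // lee_fin ler_pdivrMr ?mulr_gt0 //.
rewrite mulrC ler_pdivlMr // -subr_ge0.
rewrite -[in RHS]subr_ge0 -[in RHS](pmulr_rge0 _ v_gt0); congr (0 <= _).
by rewrite /usq_of_v; field; rewrite gt_eqF.
Qed.

Lemma usq_of_v_surj u : exists2 w, 0 < w & usq_of_v w = u ^+ 2.
Proof.
have t1_gt0 : 0 < t + 1 by rewrite addr_gt0.
pose p v := u ^+ 2 * v - (1 + v) * (t - v - v ^+ 2).
have p0 : p 0 = - t by rewrite /p; ring.
have p_gt0 : 0 < p (t + 1).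
  have -> : p (t + 1) = u ^+ 2 * (t + 1) + (t + 2) * (1 + (t + 1) ^+ 2).
    by rewrite /p; ring.
  rewrite ltr_wpDl ?(mulr_ge0 (sqr_ge0 u) (ltW t1_gt0)) //.
  by rewrite mulr_gt0 ?addr_gt0 ?exprn_gt0.
have p_cont : {within `[0, t + 1], continuous p}.
  by apply: continuous_subspaceT => x; apply: derivable1_continuous; exact: ex_derive.
have [w] : exists2 w, w \in `[0, t + 1] & p w = 0.
  apply: IVT => //; first exact: ltW.
  by rewrite p0 ge_min le_max oppr_le0 (ltW t_gt0) (ltW p_gt0) orbT.
rewrite in_itv /= => /andP[w_ge0 _] pw0.
have w_gt0 : 0 < w.
  rewrite lt_neqAle w_ge0 andbT; apply/eqP => w0.
  by move/eqP: pw0; rewrite -w0 p0 oppr_eq0 gt_eqF.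
exists w => //; move/eqP: pw0; rewrite subr_eq0 /usq_of_v -mulrA => /eqP <-.
by rewrite mulrCA mulVf ?mulr1 ?gt_eqF.
Qed.

Lemma v_t_eq u w : 0 < w -> usq_of_v w = u ^+ 2 -> v_t t u = w.
Proof.
move=> w_gt0 usq_w; rewrite /v_t.
have -> : [set v | 0 < v /\ (cauchy_G u v <= (t^-1)%:E)%E] = `[w, +oo[%classic.
  apply/seteqP; split => v /=; rewrite in_itv /= andbT.
    by case=> v_gt0; rewrite cauchy_G_le_invr // -usq_w ler_usq_of_v.
  move=> w_le_v; have v_gt0 := lt_le_trans w_gt0 w_le_v.
  by rewrite cauchy_G_le_invr // -usq_w ler_usq_of_v.
exact: inf_itv.
Qed.

Lemma v_t_gt0 u : 0 < v_t t u.
Proof. by have [w w_gt0 usq_w] := usq_of_v_surj u; rewrite (v_t_eq w_gt0 usq_w). Qed.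

Lemma usq_of_v_t u : usq_of_v (v_t t u) = u ^+ 2.
Proof. by have [w w_gt0 usq_w] := usq_of_v_surj u; rewrite (v_t_eq w_gt0 usq_w). Qed.

Local Notation V := (v_t t).

Lemma v_tB u x : V x - V u = (u ^+ 2 - x ^+ 2) / usq_of_v_slope (V u) (V x).
Proof.
have S_gt0 := usq_of_v_slope_gt0 (v_t_gt0 u) (v_t_gt0 x).
by rewrite -(usq_of_v_t u) -(usq_of_v_t x) usq_of_vB ?gt_eqF ?v_t_gt0 // mulfK ?gt_eqF.
Qed.

Lemma v_t_dist_le u x : `|V u - V x| <= `|u ^+ 2 - x ^+ 2|.
Proof.
have S_gt1 := usq_of_v_slope_gt1 (v_t_gt0 x) (v_t_gt0 u).
have S_gt0 := usq_of_v_slope_gt0 (v_t_gt0 x) (v_t_gt0 u).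
rewrite v_tB normrM normfV (gtr0_norm S_gt0) distrC ler_pdivrMr //.
by rewrite ler_peMr // ltW.
Qed.

Lemma v_t_continuous : continuous V.
Proof.
move=> u; apply/cvgrPdist_le => e e_gt0.
have sqr_cont : x ^+ 2 @[x --> u] --> u ^+ 2 by exact: exprn_continuous.
near=> x; apply: le_trans (v_t_dist_le u x) _.
by near: x; move/cvgrPdist_le: sqr_cont; apply.
Unshelve. all: by end_near. Qed.

Lemma is_derive_v_t (u : R) :
  is_derive u 1 V (- (2 * u) / usq_of_v_slope (V u) (V u)).
Proof.
pose S h := usq_of_v_slope (V u) (V (h + u)).
have S_neq0 h : S h != 0.
  by rewrite gt_eqF // usq_of_v_slope_gt0 ?v_t_gt0.
have S_cont : S h @[h --> 0] --> S 0.
  have Vu_neq0 : V u * V (0 + u) != 0 by rewrite mulf_neq0 ?gt_eqF ?v_t_gt0.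
  have dP := @is_deriveV R (fun b => V u * b) (V (0 + u)) _ 1 Vu_neq0.
  have slope_cont : {for V (0 + u), continuous (usq_of_v_slope (V u))}.
    by apply: derivable1_continuous; exact: ex_derive.
  have shift_cvg : h + u @[h --> 0] --> 0 + u.
    by apply: cvgD; [exact: cvg_id | exact: cvg_cst].
  exact: cvg_comp _ _ (cvg_comp _ _ shift_cvg (@v_t_continuous (0 + u))) slope_cont.
have quot : - (2 * u + h) / S h @[h --> 0^'] --> - (2 * u) / S 0.
  apply: cvg_within_filter; rewrite -[X in - X / _]addr0.
  apply: cvgM; last exact: cvgV.
  by apply: cvgN; apply: cvgD; [exact: cvg_cst | exact: cvg_id].
have -> : usq_of_v_slope (V u) (V u) = S 0 by rewrite /S add0r.
have diff_quot :
    (fun h => h^-1 *: ((V \o shift u) (h *: 1) - V u)) @ 0^' --> - (2 * u) / S 0.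
  apply: cvg_trans quot; apply: near_eq_cvg; near=> h.
  have h_neq0 : h != 0 by near: h; exact: nbhs_dnbhs_neq.
  rewrite /= /GRing.scale /= mulr1 v_tB -/(S h).
  by field; rewrite h_neq0 S_neq0.
apply: DeriveDef; first by apply/cvg_ex; eexists; exact: diff_quot.
by rewrite /derive; exact: cvg_lim diff_quot.
Unshelve. all: by end_near. Qed.

Lemma derive1_v_t (u : R) : derive1 V u = - (2 * u) / usq_of_v_slope (V u) (V u).
Proof. by have := is_derive_v_t u; rewrite derive1E => ?; exact: derive_val. Qed.

Lemma v_t_lt_sqr u1 u2 : u2 ^+ 2 < u1 ^+ 2 -> V u1 < V u2.
Proof.
move=> u12; rewrite -subr_gt0 v_tB divr_gt0 //; first by rewrite subr_gt0.
by rewrite usq_of_v_slope_gt0 ?v_t_gt0.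
Qed.

Lemma v_t0 : V 0 = (-1 + Num.sqrt (1 + 4 * t)) / 2.
Proof.
set s := Num.sqrt _.
have s2 : s ^+ 2 = 1 + 4 * t by rewrite sqr_sqrtr // addr_ge0 // mulr_ge0 // ltW.
have s_gt1 : 1 < s by rewrite -sqrtr1 ltr_sqrt ?ltr_pwDr ?mulr_gt0.
apply: v_t_eq; first by rewrite divr_gt0 // addrC subr_gt0.
rewrite /usq_of_v expr0n /=.
have -> : t - (-1 + s) / 2 - ((-1 + s) / 2) ^+ 2 = (1 + 4 * t - s ^+ 2) / 4 by field.
by rewrite s2 subrr mul0r mulr0.
Qed.

End v_t_characterization.

Theorem lemma6p3 (R : realType) (t : R) (ht : 0 < t) :
  (forall u : R,
     0 < v_t t u /\
     u ^+ 2 = (v_t t u)^-1 * (1 + v_t t u) * (t - v_t t u - v_t t u ^+ 2) /\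
     (forall v : R, 0 < v -> u ^+ 2 = v^-1 * (1 + v) * (t - v - v ^+ 2) ->
        v = v_t t u)) /\
  (forall u : R, derivable (v_t t) u 1) /\
  (forall u : R, u != 0 -> u * derive1 (v_t t) u < 0) /\
  (forall u1 u2 : R, u1 < u2 -> u2 <= 0 -> v_t t u1 < v_t t u2) /\
  (forall u1 u2 : R, 0 <= u1 -> u1 < u2 -> v_t t u2 < v_t t u1) /\
  v_t t 0 = (-1 + Num.sqrt (1 + 4 * t)) / 2.
Proof.
split.
  move=> u; split; first exact: v_t_gt0.
  split; first by rewrite -[LHS](usq_of_v_t ht u).
  by move=> v v_gt0 usq_v; rewrite (v_t_eq ht v_gt0 (esym usq_v)).
split; first by move=> u; case: (is_derive_v_t ht u).
split.
  move=> u u_neq0; rewrite derive1_v_t //.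
  have S_gt0 := usq_of_v_slope_gt0 ht (v_t_gt0 ht u) (v_t_gt0 ht u).
  rewrite mulrA pmulr_llt0 ?invr_gt0 // mulrN oppr_lt0 mulrCA -expr2.
  by rewrite mulr_gt0 // exprn_even_gt0.
split; first by move=> u1 u2 u12 u2_le0; apply: v_t_lt_sqr => //; nra.
split; first by move=> u1 u2 u1_ge0 u12; apply: v_t_lt_sqr => //; nra.
exact: v_t0.
Qed.
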